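(* Let $X_1,\ldots,X_k\in\mathbf{M}_{2N}(\mathbb{C})$ commute pairwise and be self-dual ($X_j^\sharp=X_j$). Then there is a single symplectic unitary $U$ such that for all $j$, \[U^{*}X_jU=\begin{bmatrix}T_j&C_j\\0&T_j^{\mathrm T}\end{bmatrix}\] with each $T_j$ upper-triangular and each $C_j$ skew-symmetric ($N\times N$ blocks).
   Context: For $X\in\mathbf{M}_{2N}(\mathbb{C})$ in $N\times N$ blocks $X=\begin{bmatrix}A&B\\C&D\end{bmatrix}$, $X^{\sharp}=\begin{bmatrix}D^{\mathrm T}&-B^{\mathrm T}\\-C^{\mathrm T}&A^{\mathrm T}\end{bmatrix}$, equivalently $X^\sharp=-ZX^{\mathrm T}Z$ with $Z=\begin{bmatrix}0&I\\-I&0\end{bmatrix}$. A symplectic unitary is a unitary $U\in\mathbf{M}_{2N}(\mathbb{C})$ with $U^{\mathrm T}ZU=Z$. *)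

From HB Require Import structures.
From mathcomp Require Import all_boot all_order all_algebra.
From mathcomp Require Import sesquilinear spectral.
Set Implicit Arguments. Unset Strict Implicit. Unset Printing Implicit Defensive.
Import Order.TTheory GRing.Theory Num.Theory.
Local Open Scope ring_scope.

(* Complex scalars: any numeric algebraically closed field C (e.g. the complex
   numbers), with conjugation conjC; M^* is  M ^t conjC  (notation ^t* of spectral.v). *)

Definition Zmx (C : numClosedFieldType) (N : nat) : 'M[C]_(N + N) :=
  block_mx 0 1%:M (- 1%:M) 0.

Definition sharp (C : numClosedFieldType) (N : nat) (X : 'M[C]_(N + N)) : 'M[C]_(N + N) :=
  - (Zmx C N *m X^T *m Zmx C N).

Definition symplectic_unitary (C : numClosedFieldType) (N : nat) (U : 'M[C]_(N + N)) : Prop :=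
  U \is unitarymx /\ U^T *m Zmx C N *m U = Zmx C N.

Definition upper_triangular (C : numClosedFieldType) (N : nat) (T : 'M[C]_N) : Prop :=
  forall i j : 'I_N, (j < i)%N -> T i j = 0.

Definition skew_symmetric (C : numClosedFieldType) (N : nat) (A : 'M[C]_N) : Prop :=
  A^T = - A.

From HB Require Import structures.
From mathcomp Require Import all_boot all_order all_algebra.
From mathcomp Require Import sesquilinear mxred spectral zify.
(* Pass to the transposes Y = X_j^T, which commute and satisfy Y Z = Z Y^T.
   Build an N x 2N matrix U with orthonormal, Z-isotropic rows (U Z U^T = 0)
   such that U Y = D U with D lower triangular, one row at a time: the
   symplectic complement ker (Z U^T) of the rows found so far is Y-stable
   (because Y Z = Z Y^T) and, as long as fewer than N rows are found, strictly
   larger than their span. Cotriangularizing the commuting restrictions of the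
   Y to it yields a vector x outside the span with x Y in span + x;
   Gram-Schmidt makes it orthonormal to the span, and it stays Z-isotropic
   since v Z v^T = 0 for the skew Z. Finally [U^T, (U Z)^*] is a symplectic
   unitary and conjugating X_j by it gives the block form, with diagonal
   blocks D^T and D. *)

Set Implicit Arguments. Unset Strict Implicit. Unset Printing Implicit Defensive.
Import Order.TTheory GRing.Theory Num.Theory Num.Def.
Local Open Scope ring_scope.
Local Open Scope sesquilinear_scope.

Lemma skew_quad_form_eq0 (R : numDomainType) n (A : 'M[R]_n) (v : 'rV[R]_n) :
  A^T = - A -> v *m A *m v^T = 0.
Proof.
move=> skewA; set a := v *m A *m v^T.
have aTN : a^T = - a by rewrite /a !trmx_mul trmxK skewA mulNmx mulmxN mulmxA.
have /matrixP/(_ 0 0) := aTN; rewrite [a]mx11_scalar !mxE eqxx /= mulr1n.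
move/eqP; rewrite -subr_eq0 opprK -mulr2n mulrn_eq0 /= => /eqP->.
by rewrite raddf0.
Qed.

Lemma adjmxM (C : numClosedFieldType) m n p (A : 'M[C]_(m, n)) (B : 'M[C]_(n, p)) :
  (A *m B)^t* = B^t* *m A^t*.
Proof. by rewrite trmx_mul map_mxM. Qed.

Lemma cotrig_stable_basis (C : numClosedFieldType) n (Ys : seq 'M[C]_n) p
    (T : 'M[C]_(p, n)) :
  {in Ys &, forall A B, comm_mx A B} -> {in Ys, forall Y, stablemx T Y} ->
  exists2 Q : 'M[C]_(\rank T, n), (Q :=: T)%MS &
    {in Ys, forall Y, exists2 M, is_trig_mx M & Q *m Y = M *m Q}.
Proof.
move=> Yscomm Tstable; set B := row_base T.
have BY Y : Y \in Ys -> B *m Y = restrictmx T Y *m B.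
  by move=> Yin; rewrite mulmxKpV // stablemx_row_base Tstable.
have [|P /unitarymx_unit Punit /allP Ptrig] :=
  @cotrigonalization _ _ [seq restrictmx T Y | Y <- Ys].
  move=> _ _ /mapP[/= Y Yin ->] /mapP[/= Y' Y'in ->].
  by rewrite /comm_mx -!conjmxM ?inE ?stablemx_row_base ?Tstable // Yscomm.
exists (P *m B).
  by apply: eqmx_trans (eq_row_base T); apply: eqmxMfull; rewrite row_full_unit.
move=> Y Yin; exists (conjmx P (restrictmx T Y)); first exact/Ptrig/map_f.
by rewrite conjumx // -mulmxA BY // (mulmxA _ P) mulmxKV // mulmxA.
Qed.

Lemma trig_basis_flag_step (F : fieldType) n (Ys : seq 'M[F]_n) r p
    (Q : 'M[F]_(r, n)) (S : 'M[F]_(p, n)) :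
  {in Ys, forall Y, exists2 M, is_trig_mx M & Q *m Y = M *m Q} ->
  ~~ (Q <= S)%MS ->
  exists x : 'rV[F]_n, [/\ (x <= Q)%MS, ~~ (x <= S)%MS &
    {in Ys, forall Y, (x *m Y <= S + x)%MS}].
Proof.
move=> Qtrig /row_subPn[i0 Qi0].
case: (@arg_minnP _ i0 (fun i => ~~ (row i Q <= S)%MS) val Qi0) => i Qi imin.
exists (row i Q); split => // [|Y /Qtrig[M /is_trig_mxP Mtrig QY]].
  exact: row_sub.
rewrite -row_mul QY row_mul mulmx_sum_row; apply: summx_sub => k _.
rewrite mxE; case: (ltngtP k i) => [ki|ik|/val_inj->].
- apply/scalemx_sub/(submx_trans _ (addsmxSl _ _)).
  by apply: contraTT ki => /imin; rewrite leqNgt.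
- by rewrite Mtrig // scale0r sub0mx.
- exact/scalemx_sub/addsmxSr.
Qed.

Lemma commuting_flag_step (C : numClosedFieldType) n (Ys : seq 'M[C]_n) p q
    (S : 'M[C]_(p, n)) (T : 'M[C]_(q, n)) :
  {in Ys &, forall A B, comm_mx A B} -> {in Ys, forall Y, stablemx T Y} ->
  (\rank S < \rank T)%N ->
  exists x : 'rV[C]_n, [/\ (x <= T)%MS, ~~ (x <= S)%MS &
    {in Ys, forall Y, (x *m Y <= S + x)%MS}].
Proof.
move=> Yscomm Tstable rkST.
have [Q QT Qtrig] := cotrig_stable_basis Yscomm Tstable.
have QS : ~~ (Q <= S)%MS.
  by apply: contraTN rkST => /mxrankS; rewrite QT -leqNgt.
have [x [xQ xS xY]] := trig_basis_flag_step Qtrig QS.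
by exists x; rewrite -QT.
Qed.

Lemma unitarymx_col_extend (C : numClosedFieldType) m n (U : 'M[C]_(m, n))
    (x : 'rV[C]_n) :
  U \is unitarymx -> ~~ (x <= U)%MS ->
  exists u : 'rV[C]_n, col_mx U u \is unitarymx /\ (U + u :=: U + x)%MS.
Proof.
move=> /unitarymxP UU xU.
set u0 := x - x *m U^t* *m U.
have u0U : u0 *m U^t* = 0 by rewrite mulmxBl -(mulmxA _ U) UU mulmx1 subrr.
set nu0 := (u0 *m u0^t*) 0 0.
have nu0_gt0 : 0 < nu0.
  rewrite /nu0 -dotmxE; apply: dotmx_is_dotmx; apply: contra xU.
  by rewrite subr_eq0 => /eqP->; exact: submxMl.
set c := (sqrtC nu0)^-1; set u := c *: u0.
have c_gt0 : 0 < c by rewrite invr_gt0 sqrtC_gt0.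
have uu : u *m u^t* = 1%:M.
  rewrite linearZ /= map_mxZ -scalemxAl -scalemxAr scalerA [u0 *m _]mx11_scalar.
  rewrite -/nu0 scale_scalar_mx (_ : c * _ * nu0 = c * c * nu0); last first.
    by congr (_ * _ * _); exact: geC0_conj (ltW c_gt0).
  by rewrite -expr2 exprVn sqrtCK mulVf ?gt_eqF.
have uU : u *m U^t* = 0 by rewrite -scalemxAl u0U scaler0.
have Uu : U *m u^t* = 0 by rewrite -[U]trmxCK -adjmxM uU trmx0 map_mx0.
exists u; split.
  apply/unitarymxP; rewrite tr_col_mx map_row_mx mul_col_row UU uu uU Uu.
  by rewrite -scalar_mx_block.
apply/eqmxP; rewrite !addsmx_sub !addsmxSl /=; apply/andP; split.
  apply/scalemx_sub/addmx_sub; first exact: addsmxSr.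
  by rewrite eqmx_opp (submx_trans (submxMl _ _) (addsmxSl _ _)).
have -> : x = x *m U^t* *m U + c^-1 *: u.
  by rewrite scalerA mulVf ?gt_eqF // scale1r addrC subrK.
by apply: addmx_sub_adds; [exact: submxMl | exact/scalemx_sub/submx_refl].
Qed.

Lemma trig_flag_col_mx (F : fieldType) m n (U : 'M[F]_(m, n)) (u : 'rV[F]_n)
    (Y : 'M[F]_n) :
  (exists2 D, is_trig_mx D & U *m Y = D *m U) -> (u *m Y <= U + u)%MS ->
  exists2 D, is_trig_mx D & col_mx U u *m Y = D *m col_mx U u.
Proof.
move=> [D Dtrig UY] /sub_addsmxP[[a b] /= uY].
exists (block_mx D 0 a b).
  by rewrite is_trig_block_mx // eqxx Dtrig is_diag_mx_is_trig ?mx11_is_diag.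
by rewrite mul_col_mx mul_block_col UY uY mul0mx addr0.
Qed.

Section Zmx.
Variables (C : numClosedFieldType) (N : nat).
Local Notation Z := (Zmx C N).

Lemma trmx_Zmx : Z^T = - Z.
Proof.
rewrite /Zmx tr_block_mx !trmx0 tr_scalar_mx linearN /= tr_scalar_mx.
by rewrite opp_block_mx !oppr0 opprK.
Qed.

Lemma Zmx_sqr : Z *m Z = - 1%:M.
Proof.
rewrite /Zmx mulmx_block !(mulmx0, mul0mx, mulmx1, mul1mx, addr0, add0r).
by rewrite [in RHS]scalar_mx_block opp_block_mx oppr0.
Qed.

Lemma map_Zmx_conjC : Z ^ conjC = Z.
Proof. by rewrite /Zmx map_block_mx !map_mx0 map_mxN map_scalar_mx /= conjC1. Qed.

Lemma Zmx_adj : Z ^t* = - Z.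
Proof. by rewrite -map_trmx map_Zmx_conjC trmx_Zmx. Qed.

Lemma mulmxZmxK m (A : 'M[C]_(m, N + N)) : A *m Z *m Z = - A.
Proof. by rewrite -mulmxA Zmx_sqr mulmxN mulmx1. Qed.

Lemma sharp_id_mulmxZ (X : 'M[C]_(N + N)) : sharp X = X -> X *m Z = Z *m X^T.
Proof. by move=> {1}<-; rewrite /sharp mulNmx mulmxZmxK opprK. Qed.

Lemma trmx_mulmxZ (A : 'M[C]_(N + N)) :
  A *m Z = Z *m A^T -> A^T *m Z = Z *m A.
Proof.
move=> /(congr1 (fun B => Z *m B *m Z)) /=.
by rewrite !mulmxA mulmxZmxK Zmx_sqr !mulNmx mul1mx => /oppr_inj->.
Qed.

End Zmx.

Section IsotropicFlag.
Variables (C : numClosedFieldType) (N : nat) (Ys : seq 'M[C]_(N + N)).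
Hypothesis Yscomm : {in Ys &, forall A B, comm_mx A B}.
Hypothesis YsZ : {in Ys, forall Y, Y *m Zmx C N = Zmx C N *m Y^T}.
Local Notation Z := (Zmx C N).

Definition symp_compl m (U : 'M[C]_(m, N + N)) := kermx (Z *m U^T).

Lemma sub_symp_compl m p (U : 'M[C]_(m, N + N)) (V : 'M[C]_(p, N + N)) :
  (V <= symp_compl U)%MS = (V *m Z *m U^T == 0).
Proof. by rewrite sub_kermx mulmxA. Qed.

Lemma rank_symp_compl m (U : 'M[C]_(m, N + N)) :
  (N + N - m <= \rank (symp_compl U))%N.
Proof.
rewrite mxrank_ker leq_sub2l // (leq_trans (mxrankM_maxr _ _)) //.
by rewrite mxrank_tr rank_leq_row.
Qed.

Lemma symp_compl_stable m (U : 'M[C]_(m, N + N)) D Y :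
  Y \in Ys -> U *m Y = D *m U -> stablemx (symp_compl U) Y.
Proof.
move=> YYs UY; rewrite sub_symp_compl.
have : symp_compl U *m (Z *m U^T) = 0 by exact: mulmx_ker.
move: (symp_compl U) => K KZU.
rewrite -(mulmxA K Y) YsZ // -!mulmxA -trmx_mul UY trmx_mul.
by rewrite (mulmxA Z) mulmxA KZU mul0mx.
Qed.

Lemma isotropic_col_mx m (U : 'M[C]_(m, N + N)) (u : 'rV[C]_(N + N)) :
  U *m Z *m U^T = 0 -> (u <= symp_compl U)%MS ->
  col_mx U u *m Z *m (col_mx U u)^T = 0.
Proof.
rewrite sub_symp_compl => UZU /eqP uZU.
have UZu : U *m Z *m u^T = 0.
  apply: trmx_inj.
  by rewrite !trmx_mul trmxK trmx_Zmx mulNmx mulmxN mulmxA uZU oppr0 trmx0.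
rewrite tr_col_mx mul_col_mx mul_col_row UZU UZu uZU.
by rewrite skew_quad_form_eq0 ?trmx_Zmx ?block_mx0.
Qed.

Definition isotropic_flag m (U : 'M[C]_(m, N + N)) :=
  [/\ U \is unitarymx, U *m Z *m U^T = 0 &
      {in Ys, forall Y, exists2 D, is_trig_mx D & U *m Y = D *m U}].

Lemma isotropic_flag_extend m (U : 'M[C]_(m, N + N)) :
  (m < N)%N -> isotropic_flag U ->
  exists U' : 'M[C]_(m + 1, N + N), isotropic_flag U'.
Proof.
move=> ltmN [Uunitary UZU Uflag].
have Kstable : {in Ys, forall Y, stablemx (symp_compl U) Y}.
  by move=> Y YYs; have [D _ UY] := Uflag Y YYs; exact: symp_compl_stable UY.
have UK : (U <= symp_compl U)%MS by rewrite sub_symp_compl UZU.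
have rkUK : (\rank U < \rank (symp_compl U))%N.
  by rewrite mxrank_unitary //; apply: leq_trans (rank_symp_compl U); lia.
have [x [xK xU xY]] := commuting_flag_step Yscomm Kstable rkUK.
have [u [U'unitary UuE]] := unitarymx_col_extend Uunitary xU.
have uUx : (u <= U + x)%MS by rewrite -UuE addsmxSr.
exists (col_mx U u); split => //.
  by apply: isotropic_col_mx => //; rewrite (submx_trans uUx) // addsmx_sub UK.
move=> Y YYs; apply: trig_flag_col_mx (Uflag Y YYs) _.
have [D _ UY] := Uflag Y YYs.
rewrite UuE (submx_trans (submxMr Y uUx)) // addsmxMr addsmx_sub xY // UY.
by rewrite andbT (submx_trans (submxMl D U) (addsmxSl U x)).
Qed.

Lemma exists_lagrangian_flag : exists U : 'M[C]_(N, N + N), isotropic_flag U.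
Proof.
suff flag m : (m <= N)%N -> exists U : 'M[C]_(m, N + N), isotropic_flag U.
  exact: flag.
elim: m => [_|m IHm ltmN].
  exists 0; split; first by apply/unitarymxP/matrixP => -[].
    by apply/matrixP => -[].
  by move=> Y _; exists 0; rewrite ?mul0mx //; apply/is_trig_mxP => -[].
have [U Uflag] := IHm (ltnW ltmN).
by rewrite -addn1; exact: isotropic_flag_extend Uflag.
Qed.

End IsotropicFlag.

Section LagrangianCompletion.
Variables (C : numClosedFieldType) (N : nat) (U : 'M[C]_(N, N + N)).
Hypotheses (Uunitary : U \is unitarymx) (UZU : U *m Zmx C N *m U^T = 0).
Local Notation Z := (Zmx C N).

Definition lagrangian_completion : 'M[C]_(N + N) := row_mx U^T ((U *m Z)^t*).

Let UU : U *m U^t* = 1%:M. Proof. exact/unitarymxP. Qed.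

Let conjU_trU : map_mx conjC U *m U^T = 1%:M.
Proof. by have := congr1 trmx UU; rewrite trmx_mul map_trmx trmxK trmx1. Qed.

Let conjU_Z_adjU : map_mx conjC U *m Z *m U^t* = 0.
Proof. by rewrite -map_Zmx_conjC -!map_mxM UZU map_mx0. Qed.

Let adjUZ : (U *m Z)^t* = - (Z *m U^t*).
Proof. by rewrite adjmxM Zmx_adj mulNmx. Qed.

Lemma adj_lagrangian_completion :
  lagrangian_completion^t* = col_mx (map_mx conjC U) (U *m Z).
Proof. by rewrite tr_row_mx map_col_mx trmxK trmxCK. Qed.

Lemma symplectic_unitary_lagrangian_completion :
  symplectic_unitary lagrangian_completion.
Proof.
split.
  apply/unitarymxP/mulmx1C; rewrite adj_lagrangian_completion mul_col_row adjUZ.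
  rewrite !mulmxN !mulmxA conjU_trU conjU_Z_adjU UZU mulmxZmxK mulNmx opprK UU.
  by rewrite oppr0 -scalar_mx_block.
rewrite /lagrangian_completion tr_row_mx trmxK adjUZ linearN /= trmx_mul.
rewrite map_trmx trmxK trmx_Zmx mulmxN opprK.
rewrite mul_col_mx mul_col_row !mulmxN !mulmxA !mulmxZmxK UZU.
by rewrite !mulNmx !opprK UU conjU_trU conjU_Z_adjU.
Qed.

Lemma lagrangian_completion_block X D :
  X *m Z = Z *m X^T -> U *m X^T = D *m U ->
  lagrangian_completion^t* *m X *m lagrangian_completion =
    block_mx D^T (map_mx conjC U *m X *m (U *m Z)^t*) 0 D.
Proof.
move=> XZ UXt.
have XU : X *m U^T = U^T *m D^T by rewrite -trmx_mul -UXt trmx_mul trmxK.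
rewrite adj_lagrangian_completion mul_col_mx mul_col_row -!mulmxA XU !mulmxA.
rewrite conjU_trU mul1mx UZU mul0mx adjUZ !mulmxN -!mulmxA (mulmxA X) XZ !mulmxA.
by rewrite mulmxZmxK !mulNmx opprK UXt -(mulmxA D) UU mulmx1.
Qed.

Lemma skew_lagrangian_completion_corner X :
  X *m Z = Z *m X^T -> skew_symmetric (map_mx conjC U *m X *m (U *m Z)^t*).
Proof.
move=> XZ; rewrite /skew_symmetric adjUZ !mulmxN linearN /= !trmx_mul map_trmx.
rewrite trmxK trmx_Zmx mulmxN mulNmx !opprK !mulmxA -(mulmxA _ Z) -XZ.
by rewrite map_trmx !mulmxA.
Qed.

End LagrangianCompletion.

Theorem mainTheorem10 (C : numClosedFieldType) (N k : nat)
  (X : 'I_k -> 'M[C]_(N + N))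
  (Hcomm : forall i j : 'I_k, X i *m X j = X j *m X i)
  (Hdual : forall j : 'I_k, sharp (X j) = X j) :
  exists U : 'M[C]_(N + N),
    symplectic_unitary U /\
    forall j : 'I_k, exists (T Cj : 'M[C]_N),
      U ^t* *m X j *m U = block_mx T Cj 0 T^T /\
      upper_triangular T /\ skew_symmetric Cj.
Proof.
have XZ j : X j *m Zmx C N = Zmx C N *m (X j)^T by exact: sharp_id_mulmxZ.
set Ys := [seq (X j)^T | j <- enum 'I_k].
have Yscomm : {in Ys &, forall A B, comm_mx A B}.
  by move=> _ _ /mapP[i _ ->] /mapP[j _ ->]; rewrite /comm_mx -!trmx_mul Hcomm.
have YsZ : {in Ys, forall Y, Y *m Zmx C N = Zmx C N *m Y^T}.
  by move=> _ /mapP[j _ ->]; rewrite trmxK; exact: trmx_mulmxZ.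
have [U [Uunitary UZU Uflag]] := exists_lagrangian_flag Yscomm YsZ.
exists (lagrangian_completion U).
split; first exact: symplectic_unitary_lagrangian_completion.
move=> j; have [D Dtrig UXt] := Uflag _ (map_f _ (mem_enum _ j)).
exists D^T, (map_mx conjC U *m X j *m (U *m Zmx C N)^t*); split.
  by rewrite (lagrangian_completion_block Uunitary UZU (XZ j) UXt) trmxK.
split; last exact: skew_lagrangian_completion_corner.
by move=> a b ba; rewrite mxE; apply/is_trig_mxP.
Qed.
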